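(* Under the standing assumptions below, for any $0\le n<\infty$, $\mathbf v\in\mathsf P_n$ and ordinal $\kappa$, we have $\mathrm{val}(\mathbf v)>\kappa$ if and only if there exists $x\in\mathcal{X}_{n+1}$ such that $\mathrm{val}(\mathbf v,x,y)\ge\kappa$ for all $y\in\mathcal{Y}_{n+1}$.
   Context: Standing assumptions: $(\mathcal{X}_t)_{t\ge1}$ Polish, $(\mathcal{Y}_t)_{t\ge1}$ countable; game: in round $t$, $\mathrm{P_A}$ plays $x_t\in\mathcal{X}_t$ then $\mathrm{P_L}$ plays $y_t\in\mathcal{Y}_t$; $\mathrm{P_L}$ wins iff the play lies in $\mathsf{W}\subseteq\prod_{t\ge1}(\mathcal{X}_t\times\mathcal{Y}_t)$, where $\mathsf{W}$ is coanalytic and finitely decidable (every element of $\mathsf{W}$ has a finite prefix all of whose continuations lie in $\mathsf{W}$); $\mathrm{P_L}$ has a winning strategy. Definitions: $\mathsf{P}_n=\prod_{t=1}^n(\mathcal{X}_t\times\mathcal{Y}_t)$ ($\mathsf P_0=\{\varnothing\}$), $\mathsf{P}=\bigcup_{n\ge0}\mathsf{P}_n$. A position $\mathbf v\in\mathsf P_n$ is active if some continuation $\mathbf w\in\prod_{t>n}(\mathcal{X}_t\times\mathcal{Y}_t)$ has $(\mathbf v,\mathbf w)\notin\mathsf{W}$; $\mathsf A_n$ is the set of active positions of length $n$, $\mathsf A=\bigcup_n\mathsf A_n$. For $\mathbf v\in\mathsf P_k$, a decision tree of depth $n$ with starting position $\mathbf v$ is $\mathbf t=\{x_{\mathbf y}\in\mathcal{X}_{k+s+1}:\mathbf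 y\in\prod_{r=k+1}^{k+s}\mathcal{Y}_r,\ 0\le s<n\}$ ($\varnothing$ has depth 0); it is active if $(\mathbf v,x_\varnothing,y_{k+1},x_{y_{k+1}},\ldots,x_{y_{k+1},\ldots,y_{k+n-1}},y_{k+n})\in\mathsf A_{k+n}$ for all $(y_{k+1},\ldots,y_{k+n})$. $\mathsf T^{\mathsf A}_{\mathbf v}$: active trees with starting position $\mathbf v$; $\mathbf t'\prec_{\mathbf v}\mathbf t$ iff $\mathbf t$ is $\mathbf t'$ with its leaves removed. For a well-founded relation, rank: $\rho(\mathbf t)=0$ if minimal, else $\sup\{\rho(\mathbf t')+1:\mathbf t'\prec\mathbf t\}$. With symbols $-1<$ all ordinals $<\mathsf\Omega$: $\mathrm{val}(\mathbf v)=-1$ if $\mathbf v\notin\mathsf A$; $=\mathsf\Omega$ if $\mathbf v\in\mathsf A$ and $\prec_{\mathbf v}$ not well-founded; otherwise $=\rho_{\prec_{\mathbf v}}(\varnothing)$. Comparisons with $\mathsf\Omega$ and $-1$ use this extended order. *)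

From Stdlib Require Import Reals ClassicalEpsilon.
Open Scope R_scope.

Set Implicit Arguments.
Unset Strict Implicit.

(* Ordinals, as Brouwer trees: [osup I f] is the least ordinal strictly
   above every [f i], i.e. sup_i (f i + 1).  Every ordinal is represented
   (e.g. alpha = osup {beta < alpha} id); the order below is the ordinal order. *)
Inductive ord : Type := osup : forall A : Type, (A -> ord) -> ord.
Arguments osup : clear implicits.

Fixpoint ole (a b : ord) : Prop :=
  match a, b with
  | osup A f, osup B g => forall i : A, exists j : B, ole (f i) (g j)
  end.

Definition olt (a b : ord) : Prop :=
  match b with osup B g => exists j : B, ole a (g j) end.

Definition rank {A : Type} {R : A -> A -> Prop} (wf : well_founded R) : A -> ord :=
  Fix wf (fun _ => ord)
    (fun t rec => osup _ (fun s : {t' : A | R t' t} => rec (proj1_sig s) (proj2_sig s))).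

Inductive eord : Type := Neg1 | Ord (o : ord) | Omega.

Definition eole (a b : eord) : Prop :=
  match a, b with
  | Neg1, _ => True
  | Ord _, Neg1 => False
  | Ord x, Ord y => ole x y
  | Ord _, Omega => True
  | Omega, Omega => True
  | Omega, _ => False
  end.

Definition eolt (a b : eord) : Prop :=
  match a, b with
  | Neg1, Neg1 => False
  | Neg1, _ => True
  | Ord _, Neg1 => False
  | Ord x, Ord y => olt x y
  | Ord _, Omega => True
  | Omega, _ => False
  end.

Definition is_metric {T : Type} (d : T -> T -> R) : Prop :=
  (forall x y, 0 <= d x y) /\ (forall x y, d x y = 0 <-> x = y) /\
  (forall x y, d x y = d y x) /\ (forall x y z, d x z <= d x y + d y z).

Definition metric_complete {T : Type} (d : T -> T -> R) : Prop :=
  forall u : nat -> T,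
    (forall eps, 0 < eps -> exists N, forall m n, (N <= m)%nat -> (N <= n)%nat -> d (u m) (u n) < eps) ->
    exists l, forall eps, 0 < eps -> exists N, forall n, (N <= n)%nat -> d (u n) l < eps.

Definition metric_separable {T : Type} (d : T -> T -> R) : Prop :=
  (T -> False) \/
  exists s : nat -> T, forall x eps, 0 < eps -> exists n, d x (s n) < eps.

Definition polish_metric {T : Type} (d : T -> T -> R) : Prop :=
  is_metric d /\ metric_complete d /\ metric_separable d.

Definition countable (T : Type) : Prop := exists f : T -> nat, forall a b, f a = f b -> a = b.

(* Rounds are indexed from 0: round t (0-based) is the paper's round t+1,
   so X t, Y t are the paper's X_{t+1}, Y_{t+1}. *)
Definition play (X Y : nat -> Type) : Type := forall t : nat, (X t * Y t)%type.

Inductive position (X Y : nat -> Type) : nat -> Type :=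
  | pnil : position X Y 0
  | psnoc : forall n, position X Y n -> X n -> Y n -> position X Y (S n).
Arguments pnil {X Y}.
Arguments psnoc {X Y n} _ _ _.

Fixpoint extends {X Y : nat -> Type} {n : nat} (v : position X Y n) (p : play X Y) : Prop :=
  match v with
  | pnil => True
  | @psnoc _ _ m v' x y => extends v' p /\ p m = (x, y)
  end.

Fixpoint prefix {X Y : nat -> Type} (p : play X Y) (n : nat) : position X Y n :=
  match n with
  | 0 => pnil
  | S m => psnoc (prefix p m) (fst (p m)) (snd (p m))
  end.

(* Baire space N^N and continuity of coordinates of a map into plays
   (= continuity for the product topology, Y t discrete). *)
Definition agree (a b : nat -> nat) (N : nat) : Prop := forall i, (i < N)%nat -> a i = b i.

Definition continuous_into_plays {X Y : nat -> Type} (dX : forall t, X t -> X t -> R)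
  (f : (nat -> nat) -> play X Y) : Prop :=
  forall t (a : nat -> nat),
    (forall eps, 0 < eps -> exists N, forall b, agree a b N -> dX t (fst (f a t)) (fst (f b t)) < eps) /\
    (exists N, forall b, agree a b N -> snd (f b t) = snd (f a t)).

Definition analytic_set {X Y : nat -> Type} (dX : forall t, X t -> X t -> R)
  (A : play X Y -> Prop) : Prop :=
  (forall p, ~ A p) \/
  exists f : (nat -> nat) -> play X Y, continuous_into_plays dX f /\
    (forall p, A p <-> exists a, f a = p).

Definition coanalytic_set {X Y : nat -> Type} (dX : forall t, X t -> X t -> R)
  (W : play X Y -> Prop) : Prop :=
  analytic_set dX (fun p => ~ W p).

Definition finitely_decidable {X Y : nat -> Type} (W : play X Y -> Prop) : Prop :=
  forall p, W p -> exists n, forall q, extends (prefix p n) q -> W q.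

Definition strategyL (X Y : nat -> Type) : Type := forall n, position X Y n -> X n -> Y n.

Definition consistent {X Y : nat -> Type} (s : strategyL X Y) (p : play X Y) : Prop :=
  forall n, snd (p n) = s n (prefix p n) (fst (p n)).

Definition L_wins {X Y : nat -> Type} (W : play X Y -> Prop) : Prop :=
  exists s : strategyL X Y, forall p, consistent s p -> W p.

Definition active {X Y : nat -> Type} (W : play X Y -> Prop) {n : nat} (v : position X Y n) : Prop :=
  exists p, extends v p /\ ~ W p.

Fixpoint dtree (X Y : nat -> Type) (k m : nat) : Type :=
  match m with
  | 0 => unit
  | S m' => (X k * (Y k -> dtree X Y (S k) m'))%type
  end.

Fixpoint active_tree {X Y : nat -> Type} (W : play X Y -> Prop) (m : nat) :
  forall k : nat, position X Y k -> dtree X Y k m -> Prop :=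
  match m return forall k, position X Y k -> dtree X Y k m -> Prop with
  | 0 => fun k v _ => active W v
  | S m' => fun k v t => forall y : Y k, @active_tree X Y W m' (S k) (psnoc v (fst t) y) (snd t y)
  end.

Fixpoint truncate {X Y : nat -> Type} (m : nat) : forall k, dtree X Y k (S m) -> dtree X Y k m :=
  match m return forall k, dtree X Y k (S m) -> dtree X Y k m with
  | 0 => fun _ _ => tt
  | S m' => fun k t => (fst t, fun y => @truncate X Y m' (S k) (snd t y))
  end.

Definition anytree (X Y : nat -> Type) (k : nat) : Type := {m : nat & dtree X Y k m}.

Definition TA {X Y : nat -> Type} (W : play X Y -> Prop) {k : nat} (v : position X Y k) : Type :=
  {t : anytree X Y k | @active_tree X Y W (projT1 t) k v (projT2 t)}.

Definition prec_tree {X Y : nat -> Type} {k : nat} (a b : anytree X Y k) : Prop :=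
  exists m : nat, exists t' : dtree X Y k (S m),
    a = existT _ (S m) t' /\ b = existT _ m (@truncate X Y m k t').

Definition precA {X Y : nat -> Type} (W : play X Y -> Prop) {k : nat} (v : position X Y k)
  (a b : TA W v) : Prop := prec_tree (proj1_sig a) (proj1_sig b).

Definition empty_tree {X Y : nat -> Type} (k : nat) : anytree X Y k := existT _ 0%nat tt.

Definition val {X Y : nat -> Type} (W : play X Y -> Prop) {k : nat} (v : position X Y k) : eord :=
  match excluded_middle_informative (active W v) with
  | right _ => Neg1
  | left Hv =>
      match excluded_middle_informative (well_founded (@precA X Y W k v)) with
      | left wf => Ord (rank wf (exist _ (empty_tree k) Hv : TA W v))
      | right _ => Omega
      end
  end.

From Stdlib Require Import Reals.
From Stdlib Require Import Classical ClassicalEpsilon FunctionalExtensionality Eqdep_dec PeanoNat.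

(* For an ordinal kappa = osup A f, "kappa <= rank(t)" unfolds to: for every
   i : A there is a one-level extension t' of t (so t' <_v t) with f i <= rank(t').
   We name this recursion [extendable W kappa t] and show
   (1) [extendable_iff_rank]: if <_v is well founded it is exactly kappa <= rank(t);
   (2) [extendable_of_not_Acc]: a non-accessible tree is extendable for every kappa,
       matching val = Omega;
   (3) [extendable_node]: a tree (x, ts) of positive depth is kappa-extendable at v
       iff every subtree ts y is kappa-extendable at (v, x, y), since the new
       leaves of the subtrees may be chosen independently (axiom of choice).
   Together these give [val_ge_iff]: kappa <= val(v) iff v is active and the empty
   tree at v is kappa-extendable.  As kappa < e iff kappa+1 <= e ([eolt_iff_succ]),
   unfolding one level of extendability with (3) at the empty tree yields the
   theorem.  The only use of the hypothesis that P_L wins is that P_L can always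
   answer a move, so truncating an active tree keeps it active. *)

Section Values.

Context {X Y : nat -> Type} (W : play X Y -> Prop).

Local Notation prec v := (@precA X Y W _ v).

Lemma active_psnoc {k} {v : position X Y k} {x : X k} {y : Y k} :
  active W (psnoc v x y) -> active W v.
Proof. intros [p [[Hv _] Hp]]. exists p. split; assumption. Qed.

(* For well-founded <_v this is "kappa <= rank". *)
Fixpoint extendable (kappa : ord) :
  forall (m k : nat) (v : position X Y k) (t : dtree X Y k m), Prop :=
  match kappa with
  | osup A f => fun m k v t => forall i : A, exists t' : dtree X Y k (S m),
      truncate t' = t /\ active_tree W v t' /\ extendable (f i) (S m) k v t'
  end.

Lemma extendable_node kappa {m k} (v : position X Y k) (x : X k)
    (ts : Y k -> dtree X Y (S k) m) :
  extendable kappa (S m) k v ((x, ts) : dtree X Y k (S m)) <->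
  forall y, extendable kappa m (S k) (psnoc v x y) (ts y).
Proof.
  revert m k v x ts; induction kappa as [A f IH]; intros m k v x ts; simpl; split.
  - intros Hext y i. destruct (Hext i) as [[x' ts'] [Htr [Hact Hsub]]].
    simpl in Htr. injection Htr as Ex Hts; subst x'.
    exists (ts' y). split; [exact (f_equal (fun g => g y) Hts) | split].
    + apply Hact.
    + exact (proj1 (IH i (S m) k v x ts') Hsub y).
  - intros Hext i.
    destruct (choice _ (fun y => Hext y i)) as [ts' Hts'].
    exists (x, ts'). split; [|split].
    + simpl. f_equal. apply functional_extensionality. intro y. apply Hts'.
    + intro y. apply Hts'.
    + apply (IH i (S m) k v x ts'). intro y. apply Hts'.
Qed.

Definition extendableA (kappa : ord) {k} (v : position X Y k) (t : TA W v) : Prop :=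
  extendable kappa (projT1 (proj1_sig t)) k v (projT2 (proj1_sig t)).

Lemma precA_inv {k} {v : position X Y k} {m} {t : dtree X Y k m} {Ht} {t' : TA W v} :
  prec v t' (exist _ (existT _ m t) Ht) ->
  exists t0 : dtree X Y k (S m),
    truncate t0 = t /\ active_tree W v t0 /\ proj1_sig t' = existT _ (S m) t0.
Proof.
  destruct t' as [a Ha]. intros [m' [t0 [Ea Et]]]; simpl in Ea, Et.
  assert (Em : m = m') by exact (f_equal (@projT1 _ _) Et). subst m'.
  apply (inj_pair2_eq_dec _ Nat.eq_dec) in Et. subst a t.
  exists t0. simpl in Ha. auto.
Qed.

Lemma rank_unfold (A : Type) (Rel : A -> A -> Prop) (wf : well_founded Rel) (t : A) :
  rank wf t = osup {t' : A | Rel t' t} (fun s => rank wf (proj1_sig s)).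
Proof.
  unfold rank at 1. rewrite Fix_eq; [reflexivity |].
  intros a g h Hgh. f_equal. apply functional_extensionality. intro s. apply Hgh.
Qed.

Lemma extendable_iff_rank {k} {v : position X Y k} (wf : well_founded (prec v)) :
  forall kappa (t : TA W v), extendableA kappa v t <-> ole kappa (rank wf t).
Proof.
  induction kappa as [A f IH]; intro t. rewrite rank_unfold.
  destruct t as [[m t] Ht]. unfold extendableA. simpl. split.
  - intros Hext i. destruct (Hext i) as [t0 [Htr [Hact Hsub]]].
    set (t' := exist _ (existT _ (S m) t0) Hact : TA W v).
    assert (Hprec : prec v t' (exist _ (existT _ m t) Ht)).
    { exists m, t0. simpl. rewrite Htr. split; reflexivity. }
    exists (exist _ t' Hprec). simpl. exact (proj1 (IH i t') Hsub).
  - intros Hle i. destruct (Hle i) as [[t' Hprec] Hle']; simpl in Hle'.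
    destruct (precA_inv Hprec) as [t0 [Htr [Hact Et']]].
    exists t0. split; [exact Htr | split; [exact Hact |]].
    pose proof (proj2 (IH i t') Hle') as Hsub. unfold extendableA in Hsub.
    rewrite Et' in Hsub. exact Hsub.
Qed.

Lemma extendable_of_not_Acc {k} {v : position X Y k} :
  forall kappa (t : TA W v), ~ Acc (prec v) t -> extendableA kappa v t.
Proof.
  induction kappa as [A f IH]; intros t Hnacc.
  assert (Hpred : exists t', prec v t' t /\ ~ Acc (prec v) t').
  { apply NNPP. intro Hall. apply Hnacc. constructor. intros t' Ht'.
    apply NNPP. intro Hn. apply Hall. eauto. }
  destruct Hpred as [t' [Hprec Hnacc']].
  destruct t as [[m t] Ht]. intro i.
  destruct (precA_inv Hprec) as [t0 [Htr [Hact Et']]].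
  exists t0. split; [exact Htr | split; [exact Hact |]].
  pose proof (IH i t' Hnacc') as Hsub. unfold extendableA in Hsub.
  rewrite Et' in Hsub. exact Hsub.
Qed.

Variable answer : strategyL X Y.

Lemma active_truncate {m k} {v : position X Y k} {t : dtree X Y k (S m)} :
  active_tree W v t -> active_tree W v (truncate t).
Proof.
  revert k v t; induction m as [|m IH]; intros k v t Hact; simpl in *.
  - exact (active_psnoc (Hact (answer k v (fst t)))).
  - intro y. apply IH, Hact.
Qed.

(* Every active tree is reached from the empty tree by truncations, so
   well-foundedness of <_v reduces to accessibility of the empty tree. *)
Lemma Acc_from_empty {k} {v : position X Y k} {Hv : active W v} :
  Acc (prec v) (exist _ (empty_tree k) Hv) -> well_founded (prec v).
Proof.
  intros Hacc [[m t] Ht]; simpl in Ht. revert t Ht; induction m as [|m IH]; intros t Ht.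
  - destruct t. replace Ht with Hv by apply proof_irrelevance. exact Hacc.
  - apply (Acc_inv (IH (truncate t) (active_truncate Ht))).
    exists m, t. split; reflexivity.
Qed.

Lemma val_ge_iff {k} (v : position X Y k) kappa :
  eole (Ord kappa) (val W v) <-> active W v /\ extendable kappa 0 k v tt.
Proof.
  unfold val. destruct (excluded_middle_informative (active W v)) as [Hv | Hv];
    [| simpl; tauto].
  destruct (excluded_middle_informative (well_founded (prec v))) as [wf | Hnwf]; simpl.
  - rewrite <- (extendable_iff_rank wf kappa (exist _ (empty_tree k) Hv)).
    unfold extendableA. simpl. tauto.
  - split; [intros _ | tauto]. split; [exact Hv |].
    apply (extendable_of_not_Acc kappa (exist _ (empty_tree k) Hv)).
    intro Hacc. exact (Hnwf (Acc_from_empty Hacc)).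
Qed.

End Values.

Lemma eolt_iff_succ (kappa : ord) (e : eord) :
  eolt (Ord kappa) e <-> eole (Ord (osup unit (fun _ => kappa))) e.
Proof.
  destruct e as [| [B g] |]; simpl; tauto.
Qed.

Theorem mainTheorem17
  (X Y : nat -> Type)
  (dX : forall t, X t -> X t -> R)
  (HX : forall t, polish_metric (dX t))
  (HY : forall t, countable (Y t))
  (W : play X Y -> Prop)
  (HWco : coanalytic_set dX W)
  (HWfd : finitely_decidable W)
  (HL : L_wins W)
  (n : nat) (v : position X Y n) (kappa : ord) :
  eolt (Ord kappa) (val W v) <->
  exists x : X n, forall y : Y n, eole (Ord kappa) (val W (psnoc v x y)).
Proof.
  destruct HL as [answer _].
  rewrite eolt_iff_succ, (val_ge_iff W answer). split.
  - intros [_ Hext]. destruct (Hext tt) as [[x ts] [_ [Hact Hnode]]].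
    exists x. intro y. apply (val_ge_iff W answer). split; [exact (Hact y) |].
    destruct (ts y) eqn:Ets. rewrite <- Ets.
    exact (proj1 (extendable_node W kappa v x ts) Hnode y).
  - intros [x Hx].
    assert (Hchild : forall y, active W (psnoc v x y) /\
                               extendable W kappa 0 (S n) (psnoc v x y) tt)
      by (intro y; apply (val_ge_iff W answer), Hx).
    split; [exact (active_psnoc W (proj1 (Hchild (answer n v x)))) |].
    intros []. exists (x, fun _ => tt). split; [reflexivity | split].
    + intro y. apply Hchild.
    + apply (extendable_node W kappa (m := 0) v x (fun _ => tt)). intro y. apply Hchild.
Qed.
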